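(* Let $a=\{a_1,\dots,a_m\}$ and $b=\{b_1,\dots,b_m\}$ be positive integers with $a_r\neq b_r$ for all $r$, and fix $n\ge 0$. There is a function $P_{n,a,b}:\mathbb{Z}_{\ge0}\to\mathbb{Q}$ and a number $N=N(n,a,b)$ such that for every $s\ge1$ and all positive integers $k_1,\dots,k_s$ with $k_1+1,\dots,k_s+1$ primes larger than $N$, the number of $n$-element independent sets of $G(a,b,k_1)+\cdots+G(a,b,k_s)$ equals $P_{n,a,b}(k_1+\cdots+k_s)$. Furthermore, if the ratios $a_1/b_1,\dots,a_m/b_m$ are multiplicatively independent, then $P_{n,a,b}$ can be chosen to depend only on $n$ and $m$ (i.e. the same function works for all such $a,b$ with the same $m$).
   Context: A set $\{c_1,\dots,c_m\}$ of positive rationals is multiplicatively independent if $c_1^{i_1}\cdots c_m^{i_m}=1$ with integers $i_1,\dots,i_m$ implies $i_1=\dots=i_m=0$. For positive integers $k$, $G(a,b,k)$ is the simple graph with vertex set $\{1,2,\dots,k\}$ in which distinct vertices $i,j$ are adjacent if and only if $a_ri\equiv b_rj\pmod{k+1}$ or $a_rj\equiv b_ri\pmod{k+1}$ for some $1\le r\le m$. $G_1+\cdots+G_s$ denotes the disjoint union of graphs. An independent set is a set of vertices no two of which are adjacent. *)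

From HB Require Import structures.
From mathcomp Require Import all_boot all_order all_algebra.
Set Implicit Arguments. Unset Strict Implicit. Unset Printing Implicit Defensive.
Import Order.TTheory GRing.Theory Num.Theory.

Definition Gadj (m : nat) (a b : 'I_m -> nat) (k i j : nat) : bool :=
  (i != j) &&
  [exists r : 'I_m, (a r * i == b r * j %[mod k.+1]) ||
                    (a r * j == b r * i %[mod k.+1])].

(* Vertices of the disjoint union G(a,b,k_1)+...+G(a,b,k_s), ks = [k_1;...;k_s]:
   a pair (t, v) with t < s and v : 'I_(k_t) representing vertex v+1 of G(a,b,k_t). *)
Definition union_vertex (ks : seq nat) : finType :=
  {t : 'I_(size ks) & 'I_(nth 0 ks t)}.

Definition union_adj (m : nat) (a b : 'I_m -> nat) (ks : seq nat)
  (x y : union_vertex ks) : bool :=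
  (val (tag x) == val (tag y)) &&
  Gadj a b (nth 0 ks (tag x)) (val (tagged x)).+1 (val (tagged y)).+1.

Definition independent (m : nat) (a b : 'I_m -> nat) (ks : seq nat)
  (S : {set union_vertex ks}) : bool :=
  [forall x in S, forall y in S, ~~ union_adj a b x y].

Definition num_indep (m : nat) (a b : 'I_m -> nat) (ks : seq nat) (n : nat) : nat :=
  #|[set S : {set union_vertex ks} | (#|S| == n) && independent a b S]|.

Definition mult_indep_ratios (m : nat) (a b : 'I_m -> nat) : Prop :=
  forall e : 'I_m -> int,
    (\prod_(r < m) ((a r)%:R / (b r)%:R : rat) ^ (e r))%R = 1%R ->
    forall r, e r = 0%R.

From HB Require Import structures.
From mathcomp Require Import all_boot all_order all_algebra.
From mathcomp Require Import zify.
Set Implicit Arguments. Unset Strict Implicit. Unset Printing Implicit Defensive.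
Import GRing.Theory Num.Theory.

(* Count ordered n-tuples instead of sets: num_indep * n! is the number of injective
   tuples (x_i) of vertices with no two entries adjacent. Distinctness and
   non-adjacency say that the tuple avoids congruences E x_i = F x_j (mod k+1) inside a
   block, where E, F are monomials in the a_r, b_r. Inclusion-exclusion over such a list
   of constraints needs two moves only. A constraint on a single variable holds for all
   tuples or for none, according as E = F as integers, once k+1 is a prime larger than
   every monomial met. A constraint linking x_i and x_j determines x_j from x_i, so it
   holds on exactly a 1/K fraction of the tuples (K the number of vertices), and
   eliminating x_j turns the remaining constraints into constraints of the same shape.
   Hence the count is a function of K = k_1 + ... + k_s, depending on a, b only through
   which equalities E = F hold. All monomials met have the same degree in each index r
   on both sides, so for multiplicatively independent ratios a_r/b_r these equalities
   are the formal ones. *)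

Lemma coprime_modn_inv (c p : nat) : 0 < c -> coprime c p -> exists u, c * u = 1 %[mod p].
Proof.
move=> c_gt0 cop; case: (egcdnP p c_gt0) => u v Hdef _.
by exists u; rewrite mulnC Hdef (eqP cop) -modnDml modnMl.
Qed.

Lemma eqn_modMr_coprime (c p x y : nat) : 0 < c -> coprime c p ->
  (x * c == y * c %[mod p]) = (x == y %[mod p]).
Proof.
move=> c_gt0 cop; apply/idP/idP => /eqP xy; apply/eqP; last first.
  by rewrite -modnMml xy modnMml.
case: (coprime_modn_inv c_gt0 cop) => u cu.
have: x * c * u = y * c * u %[mod p] by rewrite -modnMml xy modnMml.
by rewrite -!mulnA -(modnMmr x) -(modnMmr y) cu !modnMmr !muln1.
Qed.

Lemma prime_coprime_lt (x p : nat) : prime p -> 0 < x -> x < p -> coprime x p.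
Proof. by move=> pp x_gt0 xp; rewrite coprime_sym prime_coprime // gtnNdvd. Qed.

Section UnionVertices.

Variable ks : seq nat.
Implicit Types w y : union_vertex ks.

Definition block_of y : nat := val (tag y).
Definition label y : nat := (val (tagged y)).+1.
Definition modulus y : nat := (nth 0 ks (tag y)).+1.

Lemma label_lt_modulus y : label y < modulus y.
Proof. by rewrite ltnS ltn_ord. Qed.

Lemma modulus_block w y : block_of w = block_of y -> modulus w = modulus y.
Proof. by rewrite /modulus /block_of => ->. Qed.

Lemma union_vertex_eq w y : block_of w = block_of y -> label w = label y -> w = y.
Proof.
case: w y => [t v] [t' v']; rewrite /block_of /label /= => /val_inj tt'.
by subst t' => -[/val_inj ->].
Qed.

Lemma card_union_vertex : #|union_vertex ks| = sumn ks.
Proof.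
rewrite card_tagged (eq_map (fun i : 'I_(size ks) => card_ord (nth 0 ks i))).
by rewrite -[in RHS](mkseq_nth 0 ks) /mkseq -val_enum_ord -map_comp.
Qed.

Definition lin_rel (al be : nat) w y : bool :=
  (block_of w == block_of y) && (al * label w == be * label y %[mod modulus w]).

Definition lin_sol (al be : nat) w : union_vertex ks :=
  odflt w [pick y | lin_rel al be w y].

Lemma lin_rel11 w y : lin_rel 1 1 w y = (w == y).
Proof.
rewrite /lin_rel !mul1n; apply/idP/eqP => [/andP[/eqP blk /eqP lbl] | ->]; last first.
  by rewrite !eqxx.
apply: (union_vertex_eq blk); move: lbl (label_lt_modulus y).
by rewrite -(modulus_block blk) => lbl y_lt; rewrite !modn_small ?label_lt_modulus in lbl.
Qed.

Hypothesis prime_modulus : forall y, prime (modulus y).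
Variables al be : nat.
Hypotheses (be_gt0 : 0 < be) (al_coprime : forall y, coprime al (modulus y))
  (be_coprime : forall y, coprime be (modulus y)).

Lemma lin_rel_exists w : exists y, lin_rel al be w y.
Proof.
have p_gt1 : 1 < modulus w by apply: prime_gt1.
case: (coprime_modn_inv be_gt0 (be_coprime w)) => u be_u.
have u_coprime : coprime u (modulus w).
  apply: modn_coprime; first by case: u be_u => //; rewrite muln0 mod0n modn_small.
  by exists be; rewrite mulnC be_u modn_small.
pose r := al * label w * u %% modulus w.
have r_gt0 : 0 < r.
  rewrite lt0n -/(dvdn _ _) -prime_coprime // coprime_sym !coprimeMl al_coprime u_coprime.
  by rewrite prime_coprime_lt ?label_lt_modulus.
have r_lt : r.-1 < nth 0 ks (tag w) by rewrite -ltnS prednK // ltn_pmod // ltnW.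
exists (Tagged (fun t : 'I_(size ks) => 'I_(nth 0 ks t)) (Ordinal r_lt)).
rewrite /lin_rel eqxx /label /= prednK // modnMmr mulnCA.
by apply/eqP; rewrite -[RHS]modnMmr be_u modnMmr muln1.
Qed.

Lemma lin_sol_rel w : lin_rel al be w (lin_sol al be w).
Proof.
rewrite /lin_sol; case: pickP => [y -> // | none].
by case: (lin_rel_exists w) => y; rewrite none.
Qed.

Lemma lin_rel_uniq w y y' : lin_rel al be w y -> lin_rel al be w y' -> y = y'.
Proof.
move=> /andP[/eqP wy /eqP ey] /andP[/eqP wy' /eqP ey'].
apply: union_vertex_eq; first by rewrite -wy -wy'.
have: label y * be == label y' * be %[mod modulus w] by rewrite !(mulnC _ be) -ey -ey'.
rewrite eqn_modMr_coprime // => /eqP.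
move: (label_lt_modulus y) (label_lt_modulus y').
by rewrite -(modulus_block wy) -(modulus_block wy') => ly ly'; rewrite !modn_small.
Qed.

Lemma lin_relE w y : lin_rel al be w y = (y == lin_sol al be w).
Proof.
apply/idP/eqP => [wy | ->]; last exact: lin_sol_rel.
exact: lin_rel_uniq wy (lin_sol_rel w).
Qed.

End UnionVertices.

Lemma sum_ffun_graph (V : finType) n (u u' : 'I_n) (g : V -> V)
    (Q : pred {ffun 'I_n -> V}) :
  u != u' ->
  (forall x x' : {ffun 'I_n -> V}, (forall i, i != u' -> x i = x' i) -> Q x = Q x') ->
  \sum_(x : {ffun 'I_n -> V}) Q x =
  #|V| * \sum_(x : {ffun 'I_n -> V}) ((x u' == g (x u)) && Q x).
Proof.
move=> uu' Q_local.
pose upd (x : {ffun 'I_n -> V}) (y : V) : {ffun 'I_n -> V} :=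
  [ffun i => if i == u' then y else x i].
pose proj x := upd x (g (x u)).
have upd_u x y : upd x y u = x u by rewrite ffunE (negbTE uu').
have Q_upd x y : Q (upd x y) = Q x.
  by apply: Q_local => i /negbTE iu'; rewrite ffunE iu'.
have proj_id (z : {ffun 'I_n -> V}) : z u' = g (z u) -> proj z = z.
  by move=> zu'; apply/ffunP => i; rewrite ffunE; case: eqP => // ->.
rewrite (partition_big proj predT) //= big_distrr /=; apply: eq_bigr => z _.
rewrite (eq_bigr (fun=> nat_of_bool (Q z))); last by move=> x /eqP <-; rewrite Q_upd.
rewrite sum_nat_cond_const mulnC.
have [zu' | zu'] := eqVneq (z u') (g (z u)); last first.
  rewrite (_ : #|_| = 0) ?muln0 //; apply: eq_card0 => x; rewrite !inE.
  by apply/negbTE; apply: contra zu' => /eqP <-; rewrite /proj /upd ffunE eqxx upd_u.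
rewrite /= mulnC; congr (_ * _).
have upd_inj : injective (upd z) by move=> y y' /ffunP /(_ u'); rewrite !ffunE eqxx.
rewrite -(card_image upd_inj); apply: eq_card => x; rewrite inE.
apply/eqP/imageP => [<- | [y _ ->]].
  exists (x u') => //; apply/ffunP => i; rewrite !ffunE.
  by case: eqP => // ->.
rewrite -{2}(proj_id z zu'); apply/ffunP => i; rewrite !ffunE (negbTE uu').
by case: eqP.
Qed.

Lemma expfz_ratio (F : fieldType) (A B : F) (x y x' y' : nat) :
  A != 0%R -> B != 0%R -> x + y = x' + y' ->
  (A ^+ x * B ^+ y = (A / B) ^ (x%:Z - x'%:Z) * (A ^+ x' * B ^+ y'))%R.
Proof.
move=> A0 B0 deg; rewrite expfzMl exprz_inv mulrACA.
rewrite !exprnP -!expfzDr //; congr (_ ^ _ * _ ^ _)%R; lia.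
Qed.

Section Monomials.

Variable m : nat.

Definition monomial := {ffun 'I_m -> nat * nat}.
Implicit Types E F : monomial.

Definition mono_one : monomial := [ffun=> (0, 0)].
Definition mono_a (r : 'I_m) : monomial := [ffun r' => (nat_of_bool (r' == r), 0)].
Definition mono_b (r : 'I_m) : monomial := [ffun r' => (0, nat_of_bool (r' == r))].
Definition mono_mul E F : monomial := [ffun r => ((E r).1 + (F r).1, (E r).2 + (F r).2)].

Definition degree E : {ffun 'I_m -> nat} := [ffun r => (E r).1 + (E r).2].

Lemma degree_mul E F E' F' :
  degree E = degree F -> degree E' = degree F' ->
  degree (mono_mul E E') = degree (mono_mul F F').
Proof.
move=> /ffunP EF /ffunP EF'; apply/ffunP => r; move: (EF r) (EF' r).
by rewrite !ffunE /=; lia.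
Qed.

Variables a b : 'I_m -> nat.
Hypotheses (a_gt0 : forall r, 0 < a r) (b_gt0 : forall r, 0 < b r).

Definition mono_eval E : nat := \prod_(r < m) (a r ^ (E r).1 * b r ^ (E r).2).

Lemma mono_eval_one : mono_eval mono_one = 1.
Proof. by rewrite /mono_eval big1 // => r _; rewrite ffunE. Qed.

Lemma mono_eval_a r : mono_eval (mono_a r) = a r.
Proof.
rewrite /mono_eval (bigD1 r) //= big1 => [|r' /negbTE r'r]; last by rewrite ffunE r'r.
by rewrite ffunE eqxx !muln1.
Qed.

Lemma mono_eval_b r : mono_eval (mono_b r) = b r.
Proof.
rewrite /mono_eval (bigD1 r) //= big1 => [|r' /negbTE r'r]; last by rewrite ffunE r'r.
by rewrite ffunE eqxx mul1n muln1.
Qed.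

Lemma mono_evalM E F : mono_eval (mono_mul E F) = mono_eval E * mono_eval F.
Proof.
rewrite /mono_eval -big_split; apply: eq_bigr => r _.
by rewrite ffunE /= !expnD mulnACA.
Qed.

Lemma mono_eval_gt0 E : 0 < mono_eval E.
Proof. by apply: prodn_gt0 => r; rewrite muln_gt0 !expn_gt0 a_gt0 b_gt0. Qed.

(* The quotient of the two values is the product of the [(a r / b r) ^ e r]. *)
Lemma mono_eval_inj E F : mult_indep_ratios a b -> degree E = degree F ->
  (mono_eval E == mono_eval F) = (E == F).
Proof.
move=> indep /ffunP deg; apply/eqP/eqP => [EF | -> //].
pose e r : int := ((E r).1%:Z - (F r).1%:Z)%R.
have evalF0 : ((mono_eval F)%:R != 0 :> rat)%R by rewrite pnatr_eq0 -lt0n mono_eval_gt0.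
have ratio : (\prod_(r < m) ((a r)%:R / (b r)%:R : rat) ^ (e r) * (mono_eval F)%:R
              = (mono_eval E)%:R)%R.
  rewrite /mono_eval !natr_prod -big_split /=; apply: eq_bigr => r _.
  rewrite !natrM !natrX; symmetry; apply: expfz_ratio; rewrite ?pnatr_eq0 -?lt0n //.
  by move: (deg r); rewrite !ffunE.
have e0 : forall r, e r = 0%R.
  by apply: indep; apply: (mulIf evalF0); rewrite mul1r ratio EF.
apply/ffunP => r; move: (e0 r) (deg r) => /eqP; rewrite subr_eq0 !ffunE => /eqP[].
by case: (E r) (F r) => x y [x' y'] /= -> xy; congr (_, _); lia.
Qed.

End Monomials.

Section Constraints.

Variables m n : nat.

Definition term := ('I_n * monomial m)%type.
(* [((i, E), (j, F))] stands for the congruence [E x_i = F x_j] inside one block. *)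
Definition constraint := (term * term)%type.
Implicit Types (c : constraint) (L : seq constraint).

(* Eliminates x_j by means of [c] : E x_i = F x_j: every term is multiplied by the
   unit F, after which F x_j is replaced by E x_i. *)
Definition subst_term c (s : term) : term :=
  if s.1 == c.2.1 then (c.1.1, mono_mul s.2 c.1.2) else (s.1, mono_mul s.2 c.2.2).

Definition subst_constraint c c' : constraint := (subst_term c c'.1, subst_term c c'.2).

Lemma subst_term_var c s : c.1.1 != c.2.1 -> (subst_term c s).1 != c.2.1.
Proof. by move=> c12; rewrite /subst_term; case: (s.1 =P c.2.1) => // /eqP. Qed.

Definition balanced c : bool := degree c.1.2 == degree c.2.2.

Lemma balanced_subst c c' :
  balanced c -> balanced c' -> balanced (subst_constraint c c').
Proof.
move=> /eqP bc /eqP bc'; apply/eqP; rewrite /subst_constraint /subst_term /=.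
by case: ifP; case: ifP => _ _ /=; apply: degree_mul.
Qed.

(* The inclusion-exclusion recursion, [ident] deciding the single-variable
   constraints; the fuel bounds the length of [L], which substitution does not shrink
   structurally. *)
Fixpoint ie_count (ident : pred constraint) (K : rat) (fuel : nat) L : rat :=
  match fuel, L with
  | f.+1, c :: L' =>
    if c.1.1 == c.2.1 then (if ident c then 0 else ie_count ident K f L')%R
    else (ie_count ident K f L' - ie_count ident K f (map (subst_constraint c) L') / K)%R
  | _, _ => (K ^+ n)%R
  end.

Lemma eq_ie_count (ident ident' : pred constraint) K f L :
  {in balanced, ident =1 ident'} -> all balanced L ->
  ie_count ident K f L = ie_count ident' K f L.
Proof.
move=> eq_ident; elim: f L => [|f IH] [|c L] //= /andP[bc bL].
rewrite eq_ident // !IH //; apply/allP => _ /mapP[c' c'L ->].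
by apply: balanced_subst => //; move/allP: bL; apply.
Qed.

Definition coef_eq (a b : 'I_m -> nat) c : bool :=
  mono_eval a b c.1.2 == mono_eval a b c.2.2.

(* Moduli above it make all monomials met by the recursion invertible and reduced. *)
Fixpoint coef_bound (a b : 'I_m -> nat) (fuel : nat) L : nat :=
  match fuel, L with
  | f.+1, c :: L' =>
    maxn (maxn (mono_eval a b c.1.2) (mono_eval a b c.2.2))
         (maxn (coef_bound a b f L') (coef_bound a b f (map (subst_constraint c) L')))
  | _, _ => 0
  end.

(* [None] encodes x_i = x_j, and [Some r] the adjacency a_r x_i = b_r x_j. *)
Definition pair_constraint (i j : 'I_n) (o : option 'I_m) : constraint :=
  if o is Some r then ((i, mono_a r), (j, mono_b r))
  else ((i, mono_one m), (j, mono_one m)).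

Definition indep_constraints : seq constraint :=
  [seq pair_constraint t.1.1 t.1.2 t.2
  | t <- enum [pred t : 'I_n * 'I_n * option 'I_m | t.1.1 != t.1.2]].

Lemma all_indep_constraints (P : pred constraint) :
  all P indep_constraints =
  [forall i, forall j, forall o, (i != j) ==> P (pair_constraint i j o)].
Proof.
rewrite all_map; apply/allP/forallP => [allP i | allP [[i j] o]].
  apply/forallP => j; apply/forallP => o; apply/implyP => ij.
  by apply: (allP (i, j, o)); rewrite mem_enum.
by rewrite mem_enum inE => ij; move/forallP/(_ j)/forallP/(_ o)/implyP: (allP i); apply.
Qed.

Lemma balanced_indep_constraints : all balanced indep_constraints.
Proof.
rewrite all_indep_constraints; apply/forallP => i; apply/forallP => j.
apply/forallP => -[r|]; apply/implyP => _; apply/eqP/ffunP => r'.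
all: by rewrite !ffunE /= ?addn0.
Qed.

End Constraints.

Section Counting.

Variables (m n : nat) (a b : 'I_m -> nat) (ks : seq nat).
Hypotheses (a_gt0 : forall r, 0 < a r) (b_gt0 : forall r, 0 < b r).
Hypothesis prime_modulus : forall y : union_vertex ks, prime (modulus y).

Local Notation vtuple := {ffun 'I_n -> union_vertex ks}.
Implicit Types (c : constraint m n) (L : seq (constraint m n)) (x : vtuple).

Definition satisfies c x : bool :=
  lin_rel (mono_eval a b c.1.2) (mono_eval a b c.2.2) (x c.1.1) (x c.2.1).

Definition avoids L x : bool := all (fun c => ~~ satisfies c x) L.

Definition count_avoiding L : nat := \sum_x avoids L x.

Lemma count_avoiding_nil : count_avoiding [::] = #|union_vertex ks| ^ n.
Proof. by rewrite /count_avoiding sum1_card card_ffun card_ord. Qed.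

Lemma count_avoiding_cons c L :
  count_avoiding L = count_avoiding (c :: L) + \sum_x (satisfies c x && avoids L x).
Proof.
rewrite /count_avoiding -big_split; apply: eq_bigr => x _ /=.
by case: (satisfies c x); case: (avoids L x).
Qed.

Lemma satisfies_self c x :
  c.1.1 = c.2.1 -> (forall y : union_vertex ks, mono_eval a b c.1.2 < modulus y) ->
  (forall y : union_vertex ks, mono_eval a b c.2.2 < modulus y) ->
  satisfies c x = coef_eq a b c.
Proof.
move=> c12 lt1 lt2; rewrite /satisfies /lin_rel /coef_eq c12 eqxx /=.
rewrite eqn_modMr_coprime ?prime_coprime_lt ?label_lt_modulus //.
by rewrite !modn_small.
Qed.

Lemma subst_term_sem c0 (s : term m n) x : satisfies c0 x ->
  let s' := subst_term c0 s in
  block_of (x s'.1) = block_of (x s.1) /\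
  mono_eval a b s'.2 * label (x s'.1) =
    mono_eval a b c0.2.2 * (mono_eval a b s.2 * label (x s.1)) %[mod modulus (x s.1)].
Proof.
move=> /andP[/eqP blk /eqP eq0] /=; rewrite /subst_term.
case: eqP => [-> | _] /=; last by rewrite mono_evalM -mulnA mulnCA.
split => //; rewrite -(modulus_block blk) mono_evalM [in RHS]mulnCA -mulnA.
by rewrite -modnMmr eq0 modnMmr.
Qed.

Lemma satisfies_subst c0 c x :
  (forall y : union_vertex ks, coprime (mono_eval a b c0.2.2) (modulus y)) ->
  satisfies c0 x -> satisfies (subst_constraint c0 c) x = satisfies c x.
Proof.
move=> cop sat0; have [blk1 ev1] := subst_term_sem c.1 sat0.
have [blk2 ev2] := subst_term_sem c.2 sat0.
rewrite /satisfies /lin_rel /= blk1 blk2 (modulus_block blk1).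
have [blk | //] := eqVneq.
rewrite -modn_mod ev1 -[in X in _ == X]modn_mod (modulus_block blk) ev2.
rewrite -(modulus_block blk).
by rewrite !modn_mod !(mulnC (mono_eval a b c0.2.2)) eqn_modMr_coprime ?mono_eval_gt0.
Qed.

Lemma count_subst c L : c.1.1 != c.2.1 ->
  (forall y : union_vertex ks, coprime (mono_eval a b c.1.2) (modulus y)) ->
  (forall y : union_vertex ks, coprime (mono_eval a b c.2.2) (modulus y)) ->
  #|union_vertex ks| * \sum_x (satisfies c x && avoids L x) =
  count_avoiding (map (subst_constraint c) L).
Proof.
move=> c12 cop1 cop2.
pose g := @lin_sol ks (mono_eval a b c.1.2) (mono_eval a b c.2.2).
have sat_graph x : satisfies c x = (x c.2.1 == g (x c.1.1)).
  exact/lin_relE/cop2/cop1/mono_eval_gt0.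
rewrite /count_avoiding [RHS](sum_ffun_graph g c12) => [|x x' xx'].
  congr (_ * _); apply: eq_bigr => x _; rewrite -sat_graph.
  case/boolP: (satisfies c x) => //= sat.
  rewrite /avoids; congr (nat_of_bool _).
  by elim: L => //= c' L ->; rewrite satisfies_subst.
rewrite /avoids; elim: L => //= c' L ->.
by rewrite /satisfies /= !xx' ?subst_term_var.
Qed.

Lemma count_avoidingE f L : size L <= f -> 0 < #|union_vertex ks| ->
  (forall y : union_vertex ks, coef_bound a b f L < modulus y) ->
  ((count_avoiding L)%:R = ie_count (coef_eq a b) #|union_vertex ks|%:R f L :> rat)%R.
Proof.
move=> + K_gt0; set K := #|union_vertex ks|.
elim: f L => [|f IH] [|c L] //=; try by rewrite count_avoiding_nil natrX.
rewrite ltnS => size_L bound.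
have {}bound (y : union_vertex ks) :
    [/\ mono_eval a b c.1.2 < modulus y, mono_eval a b c.2.2 < modulus y,
         coef_bound a b f L < modulus y &
         coef_bound a b f (map (subst_constraint c) L) < modulus y].
  by move: (bound y); rewrite !gtn_max => /andP[/andP[-> ->] /andP[-> ->]].
have IHL : ((count_avoiding L)%:R = ie_count (coef_eq a b) K%:R f L :> rat)%R.
  by apply: IH => // y; case: (bound y).
case: eqP => [c12 | /eqP c12].
  have sat_c x : satisfies c x = coef_eq a b c.
    by rewrite satisfies_self // => y; case: (bound y).
  rewrite /count_avoiding; under eq_bigr => x _ do rewrite [avoids _ _]/= sat_c.
  by case: (coef_eq a b c); [rewrite big1 | rewrite -IHL].
have cop i (y : union_vertex ks) :
    coprime (mono_eval a b (if i then c.1 else c.2).2) (modulus y).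
  by case: i (bound y) => -[lt1 lt2 _ _]; rewrite prime_coprime_lt ?mono_eval_gt0.
rewrite -IHL -IH ?size_map // => [|y]; last by case: (bound y).
rewrite -(count_subst L c12 (cop true) (cop false)) (count_avoiding_cons c L) natrD natrM.
by rewrite mulrAC divff ?mul1r ?addrK // pnatr_eq0 -lt0n.
Qed.

End Counting.

Lemma union_adjE m (a b : 'I_m -> nat) ks (w y : union_vertex ks) :
  union_adj a b w y =
  (w != y) && [exists r, lin_rel (a r) (b r) w y || lin_rel (a r) (b r) y w].
Proof.
rewrite /union_adj /Gadj /lin_rel -/(block_of w) -/(block_of y).
have [blk | blk] := eqVneq (block_of w) (block_of y); last first.
  by apply/esym/andP => -[_ /existsP[]].
rewrite -/(label w) -/(label y) -/(modulus w) (modulus_block blk) /=; congr (_ && _).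
by congr (~~ _); apply/eqP/eqP => [|-> //]; apply: union_vertex_eq.
Qed.

Section IndependentTuples.

Variables (m n : nat) (a b : 'I_m -> nat) (ks : seq nat).
Local Notation vtuple := {ffun 'I_n -> union_vertex ks}.

Definition indep_tuple (x : vtuple) : bool :=
  injectiveb x && [forall i, forall j, ~~ union_adj a b (x i) (x j)].

Lemma avoids_indep_constraints x :
  avoids a b (indep_constraints m n) x = indep_tuple x.
Proof.
rewrite /avoids all_indep_constraints /indep_tuple.
have sat1 i j : satisfies a b (pair_constraint i j None) x = (x i == x j).
  by rewrite /satisfies /= mono_eval_one lin_rel11.
have satr i j r :
    satisfies a b (pair_constraint i j (Some r)) x = lin_rel (a r) (b r) (x i) (x j).
  by rewrite /satisfies /= mono_eval_a mono_eval_b.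
apply/forallP/andP => [avoid | [/injectiveP x_inj /forallP nadj] i].
  have avoid' i j o : i != j -> ~~ satisfies a b (pair_constraint i j o) x.
    by move=> ij; move/forallP/(_ j)/forallP/(_ o)/implyP: (avoid i); apply.
  have x_inj : injective x.
    move=> i j xij; apply/eqP/negPn/negP => ij.
    by move: (avoid' i j None ij); rewrite sat1 xij eqxx.
  split; first exact/injectiveP.
  apply/forallP => i; apply/forallP => j; rewrite union_adjE negb_and negbK.
  have [-> | ij] := eqVneq i j; first by rewrite eqxx.
  apply/orP; right; apply/existsPn => r; rewrite negb_or -!satr.
  by rewrite !avoid' // eq_sym.
apply/forallP => j; apply/forallP => -[r|]; apply/implyP => ij; last first.
  by rewrite sat1 (inj_eq x_inj).
move/forallP/(_ j): (nadj i); rewrite union_adjE (inj_eq x_inj) ij /=.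
by move=> /existsPn/(_ r); rewrite satr negb_or => /andP[].
Qed.

Lemma num_indep_fact : num_indep a b ks n * n`! = \sum_(x : vtuple) indep_tuple x.
Proof.
set GS := [set S : {set union_vertex ks} | (#|S| == n) && independent a b S].
pose img (x : vtuple) := [set x i | i : 'I_n].
have card_img (x : vtuple) : injectiveb x -> #|img x| = n.
  by move/injectiveP=> x_inj; rewrite card_imset // card_ord.
rewrite -big_mkcond /= (partition_big img (fun S => S \in GS)); last first.
  move=> x /andP[x_inj /forallP nadj].
  rewrite inE card_img // eqxx /=; apply/forallP => y; apply/implyP => /imsetP[i _ ->].
  by apply/forallP => z; apply/implyP => /imsetP[j _ ->]; move/forallP: (nadj i).
rewrite /num_indep -/GS -sum_nat_const; apply: eq_bigr => S.
rewrite inE => /andP[/eqP cardS /forallP indepS].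
have -> : n`! = #|S| ^_ #|'I_n| by rewrite cardS card_ord ffactnn.
rewrite sum_nat_cond_const muln1 -card_inj_ffuns_on; apply/esym/eq_card => x; rewrite !inE.
apply/andP/andP => [[/andP[x_inj _] /eqP <-] | [/ffun_onP onS x_inj]].
  by split=> //; apply/ffun_onP => i; apply: imset_f.
have imgS : img x = S.
  apply/eqP; rewrite eqEcard card_img // cardS leqnn andbT.
  by apply/subsetP => _ /imsetP[i _ ->].
split; last by rewrite imgS.
rewrite /indep_tuple x_inj; apply/forallP => i; apply/forallP => j.
by move: (indepS (x i)); rewrite -imgS imset_f // => /forallP/(_ (x j)); rewrite imset_f.
Qed.

End IndependentTuples.

Definition indep_poly m n (ident : pred (constraint m n)) (K : nat) : rat :=
  (ie_count ident K%:R (size (indep_constraints m n)) (indep_constraints m n) / n`!%:R)%R.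

Definition indep_bound m n (a b : 'I_m -> nat) : nat :=
  coef_bound a b (size (indep_constraints m n)) (indep_constraints m n).

Lemma num_indepE m n (a b : 'I_m -> nat) ks :
  (forall r, 0 < a r) -> (forall r, 0 < b r) ->
  0 < size ks -> all (fun k => 0 < k) ks ->
  all (fun k => prime k.+1 && (indep_bound n a b < k.+1)) ks ->
  ((num_indep a b ks n)%:R = indep_poly (@coef_eq m n a b) (sumn ks))%R.
Proof.
move=> a_gt0 b_gt0 ks_gt0 k_gt0 k_prime.
have modulusP (y : union_vertex ks) : prime (modulus y) && (indep_bound n a b < modulus y).
  by move/allP: k_prime; apply; rewrite mem_nth.
have prime_mod y := proj1 (andP (modulusP y)).
have bound y := proj2 (andP (modulusP y)).
have K_gt0 : 0 < #|union_vertex ks|.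
  rewrite card_union_vertex; move: ks_gt0 k_gt0.
  by case: (ks) => //= k ks' _ /andP[k_gt0 _]; rewrite ltn_addr.
rewrite /indep_poly -card_union_vertex.
rewrite -(count_avoidingE a_gt0 b_gt0 prime_mod _ K_gt0 bound) // /count_avoiding.
under eq_bigr => x _ do rewrite avoids_indep_constraints.
by rewrite -num_indep_fact natrM mulfK // pnatr_eq0 -lt0n fact_gt0.
Qed.

Lemma indep_poly_coef_eq m n (a b : 'I_m -> nat) :
  (forall r, 0 < a r) -> (forall r, 0 < b r) -> mult_indep_ratios a b ->
  indep_poly (@coef_eq m n a b) =1 indep_poly (fun c : constraint m n => c.1.2 == c.2.2).
Proof.
move=> a_gt0 b_gt0 indep K; congr (_ / _)%R.
apply: eq_ie_count (balanced_indep_constraints m n) => c /eqP deg.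
exact: mono_eval_inj.
Qed.

Theorem corollary3p2 (m n : nat) :
  (forall a b : 'I_m -> nat,
     (forall r, 0 < a r) -> (forall r, 0 < b r) -> (forall r, a r != b r) ->
     exists (P : nat -> rat) (N : nat),
       forall ks : seq nat,
         0 < size ks -> all (fun k => 0 < k) ks ->
         all (fun k => prime k.+1 && (N < k.+1)) ks ->
         ((num_indep a b ks n)%:R = P (sumn ks))%R)
  /\
  (exists P : nat -> rat,
     forall a b : 'I_m -> nat,
       (forall r, 0 < a r) -> (forall r, 0 < b r) -> (forall r, a r != b r) ->
       mult_indep_ratios a b ->
       exists N : nat,
         forall ks : seq nat,
           0 < size ks -> all (fun k => 0 < k) ks ->
           all (fun k => prime k.+1 && (N < k.+1)) ks ->
           ((num_indep a b ks n)%:R = P (sumn ks))%R).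
Proof.
split=> [a b a_gt0 b_gt0 _ | ].
  by exists (indep_poly (@coef_eq m n a b)), (indep_bound n a b) => ks; apply: num_indepE.
exists (indep_poly (fun c : constraint m n => c.1.2 == c.2.2)).
move=> a b a_gt0 b_gt0 _ indep; exists (indep_bound n a b) => ks *.
by rewrite -(indep_poly_coef_eq n a_gt0 b_gt0 indep) num_indepE.
Qed.
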